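(* Let $a_1<a_2$ and $b_1<b_2$ be real numbers, and for $i=1,2$ let $R_i$ be the open line segment from $(-1,2a_i,a_i)$ to $(1,-2b_i,b_i)$ in $\mathbb{H}$. Then there is no horizontal line that contains both a point of $R_1$ and a point of $R_2$.
   Context: $\mathbb{H}$ is $\mathbb{R}^3$ with product $(x,y,z)\cdot(x',y',z')=(x+x',y+y',z+z'+\frac{xy'-yx'}{2})$. A horizontal line is a set $\{p\cdot tv:t\in\mathbb{R}\}$ with $p\in\mathbb{H}$ and $v=(a,b,0)\neq0$. *)

From Stdlib Require Import Reals.
Open Scope R_scope.

Definition H := (R * R * R)%type.

Definition pt (x y z : R) : H := (x, y, z).

Definition hmul (p q : H) : H :=
  match p, q with
  | (x, y, z), (x', y', z') => (x + x', y + y', z + z' + (x * y' - y * x') / 2)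
  end.

Definition horizontal_line (L : H -> Prop) : Prop :=
  exists (p : H) (a b : R), (a <> 0 \/ b <> 0) /\
    forall q : H, L q <-> exists t : R, q = hmul p (t * a, t * b, 0).

Definition open_segment (P Q : H) (q : H) : Prop :=
  match P, Q with
  | (x1, y1, z1), (x2, y2, z2) =>
    exists s : R, 0 < s < 1 /\
      q = ((1 - s) * x1 + s * x2, (1 - s) * y1 + s * y2, (1 - s) * z1 + s * z2)
  end.

Definition Rseg (a b : R) : H -> Prop :=
  open_segment (-1, 2 * a, a) (1, -2 * b, b).

(** Two points [q], [q'] of a horizontal line satisfy [2 (z' - z) = x y' - y x'],
    since [q^-1 q'] is horizontal.  For points of [R_1] and [R_2] with segment
    parameters [s] and [r], the difference of the two sides of this relation is
    [4 ((a2 - a1) (1 - r) (1 - s) + (b2 - b1) r s)], which is positive. *)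
From Stdlib Require Import Reals Lra.
Open Scope R_scope.

Definition aligned (q q' : H) : Prop :=
  let '(x, y, z) := q in
  let '(x', y', z') := q' in
  2 * (z' - z) = x * y' - y * x'.

Lemma aligned_hmul_horizontal (p : H) (a b t t' : R) :
  aligned (hmul p (t * a, t * b, 0)) (hmul p (t' * a, t' * b, 0)).
Proof. destruct p as [[x y] z]; simpl; field. Qed.

Lemma horizontal_line_aligned {L : H -> Prop} {q q' : H} :
  horizontal_line L -> L q -> L q' -> aligned q q'.
Proof.
  intros [p [a [b [_ HL]]]] Hq Hq'.
  apply HL in Hq as [t ->]; apply HL in Hq' as [t' ->].
  apply aligned_hmul_horizontal.
Qed.

Lemma Rseg_not_aligned {a1 a2 b1 b2 : R} {q1 q2 : H} :
  a1 < a2 -> b1 < b2 -> Rseg a1 b1 q1 -> Rseg a2 b2 q2 -> ~ aligned q1 q2.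
Proof.
  intros ha hb [s [Hs ->]] [r [Hr ->]]; simpl; intro Halign.
  assert (defect :
    2 * (((1 - r) * a2 + r * b2) - ((1 - s) * a1 + s * b1))
    - (((1 - s) * -1 + s * 1) * ((1 - r) * (2 * a2) + r * (-2 * b2))
       - ((1 - s) * (2 * a1) + s * (-2 * b1)) * ((1 - r) * -1 + r * 1))
    = 4 * ((a2 - a1) * ((1 - r) * (1 - s)) + (b2 - b1) * (r * s))) by ring.
  assert (0 < (a2 - a1) * ((1 - r) * (1 - s))).
  { apply Rmult_lt_0_compat; [lra | apply Rmult_lt_0_compat; lra]. }
  assert (0 < (b2 - b1) * (r * s)).
  { apply Rmult_lt_0_compat; [lra | apply Rmult_lt_0_compat; lra]. }
  lra.
Qed.

Theorem lemma6p1 (a1 a2 b1 b2 : R) (ha : a1 < a2) (hb : b1 < b2) :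
  ~ (exists L : H -> Prop, horizontal_line L /\
       (exists q1, L q1 /\ Rseg a1 b1 q1) /\
       (exists q2, L q2 /\ Rseg a2 b2 q2)).
Proof.
  intros [L [HL [[q1 [L1 S1]] [q2 [L2 S2]]]]].
  exact (Rseg_not_aligned ha hb S1 S2 (horizontal_line_aligned HL L1 L2)).
Qed.
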